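(* Let $A\in\mathcal{S}_n$, $b_1\in\mathbb{R}^n_{++}$, and consider the problem $(\bar P_1)$: $\bar f_1^*=\sup\{\lambda\in\mathbb{R}: A-\lambda b_1b_1^T\in\mathcal{C}_n\}$. (1) If $(\bar P_1)$ is infeasible, then $A\notin\mathcal{C}_n$. (2) If $(\bar P_1)$ is feasible, then: (i) if $\bar f_1^*<0$, then $A\notin\mathcal{C}_n$; (ii) if $\bar f_1^*=0$, then $A\in\operatorname{bd}(\mathcal{C}_n)$; (iii) if $\bar f_1^*>0$ and $\operatorname{rank}(A)<n$, then $A\in\operatorname{bd}(\mathcal{C}_n)$; (iv) if $\bar f_1^*>0$ and $\operatorname{rank}(A)=n$, then $A\in\operatorname{int}(\mathcal{C}_n)$.
   Context: $\mathcal{S}_n$: real symmetric $n\times n$ matrices. $\mathcal{C}_n=\{BB^T: B\in\mathbb{R}^{n\times m}\text{ entrywise nonnegative},\ m\ge1\}$ is the completely positive cone; $\operatorname{int}$ and $\operatorname{bd}$ denote interior and boundary in $\mathcal{S}_n$. $\mathbb{R}^n_{++}=\{x\in\mathbb{R}^n: x>0\text{ entrywise}\}$. *)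

From HB Require Import structures.
From Stdlib Require Import Reals ClassicalEpsilon FunctionalExtensionality.
From mathcomp Require Import all_boot all_algebra.

Set Implicit Arguments.
Unset Strict Implicit.
Unset Printing Implicit Defensive.

Definition R_eqb (x y : R) : bool := if Req_EM_T x y then true else false.

Lemma R_eqP : Equality.axiom R_eqb.
Proof. by move=> x y; rewrite /R_eqb; destruct (Req_EM_T x y); constructor. Qed.

HB.instance Definition _ := hasDecEq.Build R R_eqP.

Definition R_find (P : pred R) (n : nat) : option R :=
  match n with
  | 0 => match excluded_middle_informative (exists x, P x) with
         | left h => Some (proj1_sig (constructive_indefinite_description _ h))
         | right _ => None
         end
  | _ => None
  end.

Lemma R_find_correct P n x : R_find P n = Some x -> P x.
Proof.
case: n => [|n] //=; case: excluded_middle_informative => // h [<-].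
exact: proj2_sig (constructive_indefinite_description _ h).
Qed.

Lemma R_find_complete (P : pred R) : (exists x, P x) -> exists n, R_find P n.
Proof. by move=> h; exists 0%N => /=; case: excluded_middle_informative. Qed.

Lemma R_find_ext (P Q : pred R) : P =1 Q -> R_find P =1 R_find Q.
Proof. by move=> /functional_extensionality ->. Qed.

HB.instance Definition _ :=
  hasChoice.Build R R_find_correct R_find_complete R_find_ext.

Lemma R_addA : associative Rplus.
Proof. by move=> x y z; rewrite Rplus_assoc. Qed.
Lemma R_addC : commutative Rplus.
Proof. exact: Rplus_comm. Qed.
Lemma R_add0 : left_id R0 Rplus.
Proof. exact: Rplus_0_l. Qed.
Lemma R_addN : left_inverse R0 Ropp Rplus.
Proof. exact: Rplus_opp_l. Qed.

HB.instance Definition _ := GRing.isZmodule.Build R R_addA R_addC R_add0 R_addN.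

Lemma R_mulA : associative Rmult.
Proof. by move=> x y z; rewrite Rmult_assoc. Qed.
Lemma R_mulC : commutative Rmult.
Proof. exact: Rmult_comm. Qed.
Lemma R_mul1 : left_id R1 Rmult.
Proof. exact: Rmult_1_l. Qed.
Lemma R_mulDl : left_distributive Rmult Rplus.
Proof. by move=> x y z; rewrite Rmult_plus_distr_r. Qed.
Lemma R_one_neq0 : R1 != R0.
Proof. by apply/eqP; exact: R1_neq_R0. Qed.

HB.instance Definition _ :=
  GRing.Zmodule_isComNzRing.Build R R_mulA R_mulC R_mul1 R_mulDl R_one_neq0.

Definition R_inv (x : R) : R := if Req_EM_T x R0 then R0 else Rinv x.

Lemma R_mulVf (x : R) : x != R0 -> Rmult (R_inv x) x = R1.
Proof.
move/eqP=> hx; rewrite /R_inv; destruct (Req_EM_T x R0) as [h|h].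
  by case: hx.
exact: Rinv_l.
Qed.

Lemma R_inv0 : R_inv R0 = R0.
Proof. by rewrite /R_inv; destruct (Req_EM_T R0 R0). Qed.

HB.instance Definition _ := GRing.ComNzRing_isField.Build R R_mulVf R_inv0.

Local Open Scope ring_scope.

Definition symmetric_mx (n : nat) (A : 'M[R]_n) : Prop := A^T = A.

Definition nonneg_mx (n m : nat) (B : 'M[R]_(n, m)) : Prop :=
  forall i j, Rle R0 (B i j).

Definition pos_vec (n : nat) (b : 'cV[R]_n) : Prop :=
  forall i, Rlt R0 (b i ord0).

Definition CP (n : nat) (A : 'M[R]_n) : Prop :=
  exists (m : nat) (B : 'M[R]_(n, m)),
    (0 < m)%N /\ nonneg_mx B /\ A = B *m B^T.

(* Topology of S_n (finite-dimensional, so induced by any norm; we use the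
   max-entry norm). The ball in S_n of radius eps around A: *)
Definition in_sym_ball (n : nat) (A : 'M[R]_n) (eps : R) (X : 'M[R]_n) : Prop :=
  symmetric_mx X /\ forall i j, Rlt (Rabs (X i j - A i j)) eps.

Definition CP_interior (n : nat) (A : 'M[R]_n) : Prop :=
  symmetric_mx A /\
  exists eps : R, Rlt R0 eps /\ forall X, in_sym_ball A eps X -> CP X.

Definition CP_closure (n : nat) (A : 'M[R]_n) : Prop :=
  symmetric_mx A /\
  forall eps : R, Rlt R0 eps -> exists X, in_sym_ball A eps X /\ CP X.

Definition CP_boundary (n : nat) (A : 'M[R]_n) : Prop :=
  CP_closure A /\ ~ CP_interior A.

Definition P1_feasible_set (n : nat) (A : 'M[R]_n) (b : 'cV[R]_n) (l : R) : Prop :=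
  CP (A - l *: (b *m b^T)).

(* The feasible set of (P1bar) is a down-set (adding a multiple of b b^T to a
   completely positive matrix keeps it completely positive) and it contains 0
   exactly when A is in C_n. Hence infeasibility or f < 0 exclude A from C_n,
   and f > 0 gives A = C + l b b^T with C in C_n and l > 0.
   Boundary: a point of the closure that is interior can be moved a little in
   every symmetric direction N. For f = 0 the direction N = b b^T contradicts
   maximality of f (while A + eta b b^T, eta > 0, approach A); for rank A < n
   the direction u^T u with u A = 0 contradicts positive semidefiniteness.
   Interior (f > 0, A invertible): rotating factorizations of C and l b b^T
   gives a positive multiple kap A = W W^T with W entrywise POSITIVE; writing
   v = W y and using the factor W - g v y^T shows that A - e v v^T is in C_n
   for every v >= 0 and small e > 0. Taking v = e_k, e_k + e_m, every pair
   direction E_km + E_mk can be followed both ways, and every X near A is an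
   average of such moves. *)

From HB Require Import structures.
From Stdlib Require Import Reals Lra Classical.
From mathcomp Require Import all_boot all_algebra.

Set Implicit Arguments.
Unset Strict Implicit.
Unset Printing Implicit Defensive.
Import GRing.Theory.

Local Open Scope R_scope.

Lemma finite_uniform_radius (T : finType) (Q : T -> R -> Prop) :
  (forall t e e', Rlt R0 e' -> Rle e' e -> Q t e -> Q t e') ->
  (forall t, exists e, Rlt R0 e /\ Q t e) ->
  exists e, Rlt R0 e /\ forall t, Q t e.
Proof.
move=> down ex.
suff [e [e0 He]] : exists e, Rlt R0 e /\ forall t, t \in enum T -> Q t e.
  by exists e; split=> // t; apply: He; rewrite mem_enum.
elim: (enum T) => [|x s [es [es0 Hs]]]; first by exists R1; split=> //; lra.
have [ex0 [ex0p Hx]] := ex x.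
exists (Rmin ex0 es); split; first exact: Rmin_glb_lt.
move=> t; rewrite inE => /orP [/eqP->|ts].
  by apply: down Hx; [apply: Rmin_glb_lt | apply: Rmin_l].
by apply: down (Hs t ts); [apply: Rmin_glb_lt | apply: Rmin_r].
Qed.

Lemma small_multiple (a w : R) : Rlt R0 w ->
  exists g, Rlt R0 g /\ forall c, Rle (Rabs c) g -> Rlt (Rabs (c * a)) w.
Proof.
move=> w0; have a0 := Rabs_pos a.
exists (w / (Rabs a + 1)); split; first by apply: Rdiv_lt_0_compat; lra.
move=> c hc; rewrite Rabs_mult.
have hg : w / (Rabs a + 1) * Rabs a = w - w / (Rabs a + 1) by field; lra.
have := Rmult_le_compat_r _ _ _ a0 hc.
have : Rlt R0 (w / (Rabs a + 1)) by apply: Rdiv_lt_0_compat; lra.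
lra.
Qed.

(* Entry bound of the averaging argument for interior points. *)
Lemma Rhalf_scaled_bound (nu x e : R) :
  0 < nu -> Rabs x < e / nu -> Rabs (nu * (x / 2)) <= e.
Proof.
move=> nu0 hx.
have hx' : nu * Rabs x < e.
  have := Rmult_lt_compat_l _ _ _ nu0 hx.
  by rewrite (_ : nu * (e / nu) = e) //; field; lra.
rewrite Rabs_mult (Rabs_pos_eq nu); last lra.
rewrite /Rdiv Rabs_mult Rabs_inv (Rabs_pos_eq 2); last lra.
have := Rmult_le_pos _ _ (Rlt_le _ _ nu0) (Rabs_pos x); lra.
Qed.

Local Close Scope R_scope.

From mathcomp Require Import ring.
Local Open Scope ring_scope.

(* The MathComp ring operations on R are Stdlib's, definitionally; these
   rewrite rules expose them to lra and the Stdlib lemmas. *)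
Lemma RaddE (x y : R) : x + y = Rplus x y. Proof. by []. Qed.
Lemma RoppE (x : R) : - x = Ropp x. Proof. by []. Qed.
Lemma RmulE (x y : R) : x * y = Rmult x y. Proof. by []. Qed.
Lemma R0E : 0%R = R0 :> R. Proof. by []. Qed.
Lemma R1E : 1%R = R1 :> R. Proof. by []. Qed.
Definition RE := (RaddE, RoppE, RmulE, R0E, R1E).

Lemma natrE (k : nat) : (k%:R : R) = INR k.
Proof. by elim: k => [//|k IH]; rewrite -addn1 natrD IH plus_INR. Qed.

Lemma RinvE (x : R) : x <> R0 -> x^-1 = Rinv x.
Proof. by rewrite /GRing.inv /= /R_inv; case: Req_EM_T. Qed.

Lemma natr_pos (k : nat) : (0 < k)%N -> Rlt R0 k%:R.
Proof. by move=> k0; rewrite natrE; apply: lt_0_INR; apply/ltP. Qed.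

Lemma divr_pos (x y : R) : Rlt R0 x -> Rlt R0 y -> Rlt R0 (x / y)%R.
Proof.
move=> x0 y0; rewrite RinvE; last exact: Rgt_not_eq.
by rewrite RmulE; apply: Rmult_lt_0_compat => //; apply: Rinv_0_lt_compat.
Qed.

Lemma Rpos_neq0 (x : R) : Rlt R0 x -> x != 0.
Proof. by move=> x0; apply/eqP; apply: Rgt_not_eq. Qed.

Lemma half_scaled_bound (nu x e : R) : Rlt R0 nu ->
  Rlt (Rabs x) (e / nu)%R -> Rle (Rabs (nu * (x / 2))%R) e.
Proof.
move=> nu0; have two : (2%:R : R) = IZR 2 by rewrite natrE INR_IZR_INZ.
rewrite two !RinvE ?RmulE; [exact: Rhalf_scaled_bound | lra | exact: Rgt_not_eq].
Qed.

Definition positive_mx m p (W : 'M[R]_(m, p)) : Prop := forall i j, Rlt R0 (W i j).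

Lemma positive_perturbation m p (W P : 'M[R]_(m, p)) : positive_mx W ->
  exists g, Rlt R0 g /\
    forall g', Rle R0 g' -> Rle g' g -> positive_mx (W - g' *: P).
Proof.
move=> Wpos.
pose Q (q : 'I_m * 'I_p) g :=
  forall g', Rle R0 g' -> Rle g' g -> Rlt R0 (W q.1 q.2 - g' * P q.1 q.2).
have [g [g0 Hg]] : exists g, Rlt R0 g /\ forall q, Q q g.
  apply: finite_uniform_radius => [q e e' _ e'e He g' g'0 g'e'|[i j]].
    by apply: He => //; lra.
  have [g [g0 Hg]] := small_multiple (P i j) (Wpos i j).
  exists g; split=> // g' g'0 g'g /=.
  have := Rle_abs (g' * P i j); have := Hg g'; rewrite Rabs_pos_eq //; lra.
by exists g; split=> // g' g'0 g'g i j; rewrite !mxE; apply: (Hg (i, j)).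
Qed.

Definition nneg_vec n (v : 'cV[R]_n) : Prop := forall i, Rle R0 (v i ord0).

Lemma pos_vec_nneg n (b : 'cV[R]_n) : pos_vec b -> nneg_vec b.
Proof. by move=> pb i; apply: Rlt_le. Qed.

Lemma CP0 n : CP (0 : 'M[R]_n).
Proof.
exists 1%N, 0; split=> //; split; last by rewrite mul0mx.
by move=> i j; rewrite mxE; apply: Rle_refl.
Qed.

Lemma CP_add n (X Y : 'M[R]_n) : CP X -> CP Y -> CP (X + Y).
Proof.
move=> [m1 [B1 [m1p [B1n ->]]]] [m2 [B2 [m2p [B2n ->]]]].
exists (m1 + m2)%N, (row_mx B1 B2); split; first by rewrite addn_gt0 m1p.
split; last by rewrite tr_row_mx mul_row_col.
by move=> i j; rewrite mxE; case: split => k; [apply: B1n | apply: B2n].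
Qed.

Lemma CP_scale n (X : 'M[R]_n) (s : R) : Rle R0 s -> CP X -> CP (s *: X).
Proof.
move=> s0 [m [B [mp [Bn ->]]]].
exists m, (sqrt s *: B); split=> //; split.
  by move=> i j; rewrite mxE; apply: Rmult_le_pos; [apply: sqrt_pos | apply: Bn].
by rewrite linearZ /= -scalemxAl -scalemxAr scalerA RmulE sqrt_sqrt.
Qed.

Lemma CP_unscale n (X : 'M[R]_n) (s : R) : Rlt R0 s -> CP (s *: X) -> CP X.
Proof.
move=> s0 /(CP_scale (Rlt_le _ _ (Rinv_0_lt_compat _ s0))).
by rewrite scalerA RmulE Rinv_l ?scale1r //; apply: Rgt_not_eq.
Qed.

Lemma CP_sum n (I : Type) (r : seq I) (P : pred I) (F : I -> 'M[R]_n) :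
  (forall i, P i -> CP (F i)) -> CP (\sum_(i <- r | P i) F i).
Proof. by move=> H; apply: big_ind => //; [apply: CP0 | apply: CP_add]. Qed.

Lemma CP_rank1 n (v : 'cV[R]_n) : nneg_vec v -> CP (v *m v^T).
Proof. by move=> vn; exists 1%N, v; split=> //; split=> // i j; rewrite (ord1 j). Qed.

Lemma sum_nonneg (I : Type) (r : seq I) (F : I -> R) :
  (forall i, Rle R0 (F i)) -> Rle R0 (\sum_(i <- r) F i).
Proof.
move=> H; apply: big_ind => //; first exact: Rle_refl.
by move=> x y hx hy; rewrite RaddE; lra.
Qed.

Lemma CP_psd n (X : 'M[R]_n) (u : 'rV[R]_n) : CP X -> Rle R0 ((u *m X *m u^T) 0 0).
Proof.
move=> [m [B [mp [Bn ->]]]].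
rewrite mulmxA -mulmxA -trmx_mul mxE; apply: sum_nonneg => k.
by rewrite [X in _ * X]mxE; apply: Rle_0_sqr.
Qed.

Lemma sym_gram n m (B : 'M[R]_(n, m)) : symmetric_mx (B *m B^T).
Proof. by rewrite /symmetric_mx trmx_mul trmxK. Qed.

Lemma sym_ball_segment n (A N : 'M[R]_n) (eps : R) :
  symmetric_mx A -> symmetric_mx N -> Rlt R0 eps ->
  exists eta, Rlt R0 eta /\
    forall c, Rle (Rabs c) eta -> in_sym_ball A eps (A + c *: N).
Proof.
move=> sA sN e0.
pose Q (q : 'I_n * 'I_n) eta :=
  forall c, Rle (Rabs c) eta -> Rlt (Rabs (c * N q.1 q.2)) eps.
have [eta [eta0 Heta]] : exists eta, Rlt R0 eta /\ forall q, Q q eta.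
  apply: finite_uniform_radius => [q e e' _ e'e He c hc|q].
    by apply: He; lra.
  exact: small_multiple.
exists eta; split=> // c hc; split.
  by rewrite /symmetric_mx linearD linearZ /= sA sN.
move=> i j; rewrite !mxE /Rminus -RoppE -RaddE addrAC subrr add0r.
exact: (Heta (i, j)).
Qed.

Lemma feasible0 n (A : 'M[R]_n) (b : 'cV[R]_n) : P1_feasible_set A b R0 <-> CP A.
Proof. by rewrite /P1_feasible_set -R0E scale0r subr0. Qed.

Lemma feasible_down n (A : 'M[R]_n) (b : 'cV[R]_n) (l l' : R) : nneg_vec b ->
  P1_feasible_set A b l -> Rle l' l -> P1_feasible_set A b l'.
Proof.
move=> nb feas hl; rewrite /P1_feasible_set.
have -> : A - l' *: (b *m b^T) = (A - l *: (b *m b^T)) + (l - l') *: (b *m b^T).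
  by rewrite scalerBl addrA subrK.
by apply: CP_add => //; apply: CP_scale; [rewrite !RE; lra | apply: CP_rank1].
Qed.

Lemma lub_approx (S : R -> Prop) (f x : R) :
  is_lub S f -> Rlt x f -> exists l, S l /\ Rlt x l.
Proof.
move=> [_ lub] xf; apply: NNPP => none.
suff : Rle f x by lra.
by apply: lub => l Sl; apply: Rnot_lt_le => xl; apply: none; exists l.
Qed.

Lemma CP_closure_of_limit n (A N : 'M[R]_n) : symmetric_mx A -> symmetric_mx N ->
  (forall eta, Rlt R0 eta -> CP (A + eta *: N)) -> CP_closure A.
Proof.
move=> sA sN H; split=> // eps e0.
have [eta [eta0 Hb]] := sym_ball_segment sA sN e0.
exists (A + eta *: N); split; last exact: H.
by apply: Hb; rewrite Rabs_pos_eq; [apply: Rle_refl | apply: Rlt_le].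
Qed.

Lemma CP_interior_slack n (A N : 'M[R]_n) : CP_interior A -> symmetric_mx N ->
  exists eta, Rlt R0 eta /\ CP (A - eta *: N).
Proof.
move=> [sA [eps [e0 H]]] sN.
have [eta [eta0 Hb]] := sym_ball_segment sA sN e0.
exists eta; split=> //; rewrite -scaleNr; apply: H; apply: Hb.
by rewrite Rabs_Ropp Rabs_pos_eq; [apply: Rle_refl | apply: Rlt_le].
Qed.

(* If the optimal value of (P1bar) is 0 then A lies on the boundary: the
   matrices A + eta b b^T are feasible points approaching A, while an interior
   A would make some eta > 0 feasible. *)
Lemma boundary_of_zero_sup n (A : 'M[R]_n) (b : 'cV[R]_n) :
  symmetric_mx A -> nneg_vec b -> is_lub (P1_feasible_set A b) R0 -> CP_boundary A.
Proof.
move=> sA nb lubA; split.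
  apply: (CP_closure_of_limit sA (sym_gram b)) => eta eta0.
  have [l [feas hl]] := lub_approx lubA (Ropp_lt_gt_0_contravar _ eta0).
  have := feasible_down nb feas (Rlt_le _ _ hl).
  by rewrite /P1_feasible_set -RoppE scaleNr opprK.
move=> iA; have [eta [eta0 feas]] := CP_interior_slack iA (sym_gram b).
by have := proj1 lubA eta feas; lra.
Qed.

Lemma left_kernel_vec n (A : 'M[R]_n) :
  (\rank A < n)%N -> exists u : 'rV[R]_n, u != 0 /\ u *m A = 0.
Proof.
move=> hr.
have hK : kermx A != 0.
  apply/eqP => h; have := mxrank_ker A; rewrite h mxrank0 => /esym/eqP.
  by rewrite subn_eq0 leqNgt hr.
have [i hi] : exists i, row i (kermx A) != 0.
  apply: NNPP => none; move/eqP: hK; apply; apply/row_matrixP => i.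
  by rewrite row0; apply/eqP; apply: NNPP => h; apply: none; exists i; apply/negP.
by exists (row i (kermx A)); split=> //; rewrite -row_mul mulmx_ker row0.
Qed.

Lemma sqnorm_pos n (u : 'rV[R]_n) : u != 0 -> Rlt R0 ((u *m u^T) 0 0).
Proof.
move=> nz.
have [k hk] : exists k, u 0 k <> R0.
  apply: NNPP => none; move/eqP: nz; apply; apply/matrixP => i j.
  by rewrite (ord1 i) mxE; apply: NNPP => h; apply: none; exists j.
rewrite mxE (bigD1 k) //= RaddE [u^T k 0]mxE.
apply: Rplus_lt_le_0_compat; first by rewrite RmulE; nra.
rewrite big_mkcond; apply: sum_nonneg => i; case: (i != k); last exact: Rle_refl.
by rewrite [u^T i 0]mxE; apply: Rle_0_sqr.
Qed.

(* A singular CP matrix lies on the boundary: moving it along -u^T u, with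
   u A = 0, leaves the positive semidefinite cone, hence C_n. *)
Lemma boundary_of_singular n (A : 'M[R]_n) :
  symmetric_mx A -> CP A -> (\rank A < n)%N -> CP_boundary A.
Proof.
move=> sA cA hr; split.
  (* A itself is in C_n: take the trivial direction N = 0. *)
  apply: (CP_closure_of_limit sA (sym_gram (0 : 'M[R]_(n, 1)))) => eta _.
  by rewrite mul0mx scaler0 addr0.
move=> iA; have [u [unz uA]] := left_kernel_vec hr.
have [eta [eta0 cX]] := CP_interior_slack iA (sym_gram u^T).
have s0 := sqnorm_pos unz; set s := (u *m u^T) 0 0 in s0.
have := CP_psd u cX; rewrite trmxK.
rewrite mulmxBr mulmxBl uA mul0mx sub0r -!scalemxAr -scalemxAl !mulmxA.
rewrite -(mulmxA (u *m u^T)) [u *m u^T]mx11_scalar -/s -scalar_mxM !mxE /= mulr1n.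
have := Rmult_lt_0_compat _ _ eta0 (Rmult_lt_0_compat _ _ s0 s0).
by rewrite !RE; lra.
Qed.

Lemma gram_rotation n m (P Q : 'M[R]_(n, m)) (t : R) :
  (P + t *: Q) *m (P + t *: Q)^T + (Q - t *: P) *m (Q - t *: P)^T
  = (1 + t * t) *: (P *m P^T + Q *m Q^T).
Proof.
rewrite !(linearD, linearN, linearZ) /= !(mulmxDl, mulmxDr, mulNmx, mulmxN).
rewrite !(=^~scalemxAl, mulNmx, scaleNr, mulmxN).
move: (P *m P^T) (P *m Q^T) (Q *m P^T) (Q *m Q^T) => a b c d.
by apply/matrixP => i j; rewrite !mxE; ring.
Qed.

Lemma gram_repeat n m (b : 'cV[R]_n) :
  (b *m const_mx 1 : 'M[R]_(n, m)) *m (b *m const_mx 1)^T = m%:R *: (b *m b^T).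
Proof.
have JJ : (const_mx 1 : 'M[R]_(1, m)) *m (const_mx 1)^T = (m%:R)%:M.
  apply/matrixP => i j; rewrite !ord1 !mxE /= mulr1n.
  by rewrite (eq_bigr (fun=> 1)) ?sumr_const ?card_ord // => k _; rewrite !mxE mulr1.
by rewrite trmx_mul mulmxA -(mulmxA b) JJ mul_mx_scalar -scalemxAl.
Qed.

(* If C is CP, b > 0 and l > 0, then a positive multiple of C + l b b^T has an
   entrywise POSITIVE factorization: rotate the factors sqrt(m/l) B of
   (m/l) C and D = [b ... b] of m b b^T by a small t. *)
Lemma positive_factorization n (C : 'M[R]_n) (b : 'cV[R]_n) (l : R) :
  CP C -> pos_vec b -> Rlt R0 l ->
  exists p (W : 'M[R]_(n, p)) (kap : R), (0 < p)%N /\ Rlt R0 kap /\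
    positive_mx W /\ W *m W^T = kap *: (C + l *: (b *m b^T)).
Proof.
move=> [m [B [m0 [Bn ->]]]] pb l0.
pose r := (m%:R / l)%R; pose B' := sqrt r *: B.
pose D := b *m const_mx 1 : 'M[R]_(n, m).
have r0 : Rlt R0 r by apply: divr_pos => //; apply: natr_pos.
have mrl : m%:R = r * l by rewrite /r mulrVK ?unitfE ?Rpos_neq0.
have BB : B' *m B'^T = r *: (B *m B^T).
  by rewrite linearZ /= -scalemxAl -scalemxAr scalerA RmulE sqrt_sqrt //; apply: Rlt_le.
have Dpos : positive_mx D by move=> i k; rewrite mxE big_ord1 mxE mulr1; apply: pb.
have [t [t0 Dt]] := positive_perturbation B' Dpos.
exists (m + m)%N, (row_mx (B' + t *: D) (D - t *: B')), ((1 + t * t) * r).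
split; first by rewrite addn_gt0 m0.
split; first by rewrite !RE; apply: Rmult_lt_0_compat => //; nra.
split.
  move=> i j; rewrite mxE; case: split => k; last by apply: Dt; lra.
  have hB : Rle R0 (B' i k).
    by rewrite mxE; apply: Rmult_le_pos; [apply: sqrt_pos | apply: Bn].
  have hD := Rmult_lt_0_compat _ _ t0 (Dpos i k).
  have -> : (B' + t *: D) i k = B' i k + t * D i k by rewrite !mxE.
  by rewrite !RE; lra.
rewrite tr_row_mx mul_row_col gram_rotation BB gram_repeat mrl.
move: (B *m B^T) (b *m b^T) => X Y.
by apply/matrixP => i j; rewrite !mxE; ring.
Qed.

Lemma gram_rank1_update n p (W : 'M[R]_(n, p)) (v : 'cV[R]_n) (y : 'cV[R]_p) (g : R) :
  W *m y = v ->
  (W - g *: (v *m y^T)) *m (W - g *: (v *m y^T))^T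
  = W *m W^T - (g + g - g * g * (y^T *m y) 0 0) *: (v *m v^T).
Proof.
move=> Wy.
have h1 : W *m (v *m y^T)^T = v *m v^T by rewrite trmx_mul trmxK mulmxA Wy.
have h2 : v *m y^T *m W^T = v *m v^T by rewrite -mulmxA -trmx_mul Wy.
have h3 : v *m y^T *m (v *m y^T)^T = (y^T *m y) 0 0 *: (v *m v^T).
  rewrite trmx_mul trmxK mulmxA -(mulmxA v) {1}[y^T *m y]mx11_scalar.
  by rewrite mul_mx_scalar -scalemxAl.
rewrite !(linearD, linearN, linearZ) /= !(mulmxDl, mulmxDr, mulNmx, mulmxN).
rewrite !(scalerN, mulNmx, mulmxN, =^~scalemxAl, =^~scalemxAr) h1 h2 h3 !scalerA.
move: (W *m W^T) (v *m v^T) => K V.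
by apply/matrixP => i j; rewrite !mxE; ring.
Qed.

(* If W > 0 entrywise and W W^T is invertible, then W W^T - e v v^T is CP for
   some e > 0, for any v: solving W y = v, the factor W - g v y^T stays
   positive for small g > 0 and has the required Gram matrix. *)
Lemma shrink_positive_gram n p (W : 'M[R]_(n, p)) (v : 'cV[R]_n) :
  (0 < p)%N -> positive_mx W -> W *m W^T \in unitmx ->
  exists e, Rlt R0 e /\ CP (W *m W^T - e *: (v *m v^T)).
Proof.
move=> p0 Wpos uK.
pose y := W^T *m (invmx (W *m W^T) *m v).
have Wy : W *m y = v by rewrite !mulmxA mulmxV // mul1mx.
set s := (y^T *m y) 0 0.
have [g0 [g00 Hg0]] := positive_perturbation (v *m y^T) Wpos.
have s1 : Rlt R0 (Rabs s + 1) by have := Rabs_pos s; lra.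
pose g := Rmin g0 (/ (Rabs s + 1)).
have g0' : Rlt R0 g by apply: Rmin_glb_lt => //; apply: Rinv_0_lt_compat.
have gs : Rlt (g * Rabs s) 1.
  have := Rmult_le_compat_r _ _ _ (Rlt_le _ _ s1) (Rmin_r g0 (/ (Rabs s + 1))).
  rewrite Rinv_l; last exact: Rgt_not_eq.
  by rewrite -/g; lra.
exists (g + g - g * g * s); split.
  have : Rle (g * s) (g * Rabs s) by apply: Rmult_le_compat_l; [lra | apply: Rle_abs].
  by rewrite !RE; nra.
exists p, (W - g *: (v *m y^T)); split=> //; split; last by rewrite gram_rank1_update.
by move=> i j; apply: Rlt_le; apply: Hg0; [lra | apply: Rmin_l].
Qed.

Lemma CP_segment n (A : 'M[R]_n) (v : 'cV[R]_n) (e c : R) :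
  nneg_vec v -> CP A -> CP (A - e *: (v *m v^T)) -> Rle (Rabs c) e ->
  CP (A + c *: (v *m v^T)).
Proof.
move=> vn cA cAe hc.
case: (Rle_or_lt R0 c) => c0.
  by apply: CP_add => //; apply: CP_scale => //; apply: CP_rank1.
have -> : A + c *: (v *m v^T) = (A - e *: (v *m v^T)) + (e + c) *: (v *m v^T).
  by rewrite scalerDl addrA subrK.
apply: CP_add => //; apply: CP_scale; last exact: CP_rank1.
by have := Rabs_left c c0; rewrite RaddE; lra.
Qed.

Lemma nneg_delta n (k : 'I_n) : nneg_vec (delta_mx k 0 : 'cV[R]_n).
Proof. by move=> i; rewrite mxE natrE; apply: pos_INR. Qed.

Lemma gram_delta n (k : 'I_n) :
  (delta_mx k 0 : 'cV[R]_n) *m (delta_mx k 0)^T = delta_mx k k.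
Proof. by rewrite trmx_delta mul_delta_mx. Qed.

Lemma gram_delta2 n (k m : 'I_n) :
  let f := (delta_mx k 0 + delta_mx m 0 : 'cV[R]_n) in
  f *m f^T = delta_mx k k + delta_mx k m + delta_mx m k + delta_mx m m.
Proof. by rewrite /= linearD /= !trmx_delta mulmxDl !mulmxDr !mul_delta_mx !addrA. Qed.

Lemma natr3 : (3%:R : R) = IZR 3.
Proof. by rewrite natrE INR_IZR_INZ. Qed.

(* If A is CP and can be moved a little along -v v^T for every v >= 0, then
   for some e > 0 it can be moved by any c in [-e, e] along each symmetric
   pair direction E_km + E_mk; with f = e_k + e_m,
   3 (A + c (E_km + E_mk)) = (A + 3c f f^T) + (A - 3c e_k e_k^T) + (A - 3c e_m e_m^T). *)
Lemma CP_pair_slack n (A : 'M[R]_n) : CP A ->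
  (forall v, nneg_vec v -> exists e, Rlt R0 e /\ CP (A - e *: (v *m v^T))) ->
  exists e, Rlt R0 e /\ forall k m c, Rle (Rabs c) e ->
    CP (A + c *: (delta_mx k m + delta_mx m k)).
Proof.
move=> cA slack.
pose Q (q : 'I_n * 'I_n) e := forall c, Rle (Rabs c) e ->
  CP (A + c *: (delta_mx q.1 q.2 + delta_mx q.2 q.1)).
suff [e [e0 He]] : exists e, Rlt R0 e /\ forall q, Q q e.
  by exists e; split=> // k m; apply: (He (k, m)).
apply: finite_uniform_radius => [q e e' _ e'e He c hc|[k m] /=].
  by apply: He; lra.
have nf : nneg_vec (delta_mx k 0 + delta_mx m 0 : 'cV[R]_n).
  by move=> i; rewrite mxE; apply: Rplus_le_le_0_compat; apply: nneg_delta.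
have [e1 [e10 H1]] := slack _ nf.
have [e2 [e20 H2]] := slack _ (nneg_delta k).
have [e3 [e30 H3]] := slack _ (nneg_delta m).
pose e := Rmin e1 (Rmin e2 e3).
have [ee1 ee2 ee3] : [/\ Rle e e1, Rle e e2 & Rle e e3].
  split; first exact: Rmin_l.
    by apply: Rle_trans (Rmin_r _ _) (Rmin_l _ _).
  by apply: Rle_trans (Rmin_r _ _) (Rmin_r _ _).
have e0 : Rlt R0 e by do 2![apply: Rmin_glb_lt => //].
exists (Rdiv e 3); split=> [|c hc]; first lra.
have h3c : Rle (Rabs (3%:R * c)) e.
  by rewrite natr3 Rabs_mult Rabs_pos_eq; lra.
have h3c' : Rle (Rabs (- (3%:R * c))) e by rewrite Rabs_Ropp.
have cF := CP_segment nf cA H1 (Rle_trans _ _ _ h3c ee1).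
have cK := CP_segment (nneg_delta k) cA H2 (Rle_trans _ _ _ h3c' ee2).
have cM := CP_segment (nneg_delta m) cA H3 (Rle_trans _ _ _ h3c' ee3).
apply: (@CP_unscale _ _ 3%:R); first by rewrite natr3; lra.
suff -> : 3%:R *: (A + c *: (delta_mx k m + delta_mx m k)) =
    (A + (3%:R * c) *: (delta_mx k k + delta_mx k m + delta_mx m k + delta_mx m m))
    + (A + - (3%:R * c) *: delta_mx k k) + (A + - (3%:R * c) *: delta_mx m m).
  by rewrite -gram_delta2 -!gram_delta; apply: CP_add; [apply: CP_add|].
by apply/matrixP => i j; rewrite !mxE; ring.
Qed.

Lemma sym_pair_expansion n (E : 'M[R]_n) : symmetric_mx E ->
  \sum_(k < n) \sum_(m < n) (E k m / 2) *: (delta_mx k m + delta_mx m k) = E.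
Proof.
move=> sE; have sEkm k m : E m k = E k m by rewrite -{1}sE mxE.
have swap : \sum_(k < n) \sum_(m < n) (E k m / 2) *: delta_mx m k
          = \sum_(k < n) \sum_(m < n) (E k m / 2) *: delta_mx k m.
  by rewrite exchange_big /=; apply: eq_bigr => k _; apply: eq_bigr => m _; rewrite sEkm.
rewrite (eq_bigr (fun k => \sum_(m < n) (E k m / 2) *: delta_mx k m
                          + \sum_(m < n) (E k m / 2) *: delta_mx m k)); last first.
  by move=> k _; rewrite -big_split; apply: eq_bigr => m _; rewrite scalerDr.
rewrite big_split /= swap [RHS]matrix_sum_delta -big_split; apply: eq_bigr => k _.
rewrite -big_split; apply: eq_bigr => m _ /=; rewrite -scalerDl; congr (_ *: _).
by field; apply: Rpos_neq0; apply: natr_pos.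
Qed.



(* If A + c (E_km + E_mk) is CP for all k, m and |c| <= e, then the symmetric
   matrix A is interior: every X = A + E with |E_km| < e / n^2 is the average
   over (k, m) of A + (n^2 E_km / 2) (E_km + E_mk). *)
Lemma CP_interior_of_pair_slack n (A : 'M[R]_n) (e : R) :
  symmetric_mx A -> Rlt R0 e ->
  (forall k m c, Rle (Rabs c) e -> CP (A + c *: (delta_mx k m + delta_mx m k))) ->
  CP_interior A.
Proof.
move=> sA e0 slack; split=> //.
have [n0|n_gt0] := posnP n.
  subst n; exists R1; split=> [|X _]; first lra.
  by rewrite (flatmx0 X); apply: CP0.
pose nu : R := (n * n)%:R.
have nu0 : Rlt R0 nu by apply: natr_pos; rewrite muln_gt0 n_gt0.
exists (e / nu)%R; split; first exact: divr_pos.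
move=> X [sX hX]; set E := X - A.
have sE : symmetric_mx E by rewrite /symmetric_mx linearB /= sX sA.
have avgA : \sum_(k < n) \sum_(m < n) nu^-1 *: A = A.
  rewrite !sumr_const !card_ord -mulrnA scalerMnl -mulr_natr mulVf ?scale1r //.
  exact: Rpos_neq0.
have -> : X = \sum_(k < n) \sum_(m < n)
    nu^-1 *: (A + (nu * (E k m / 2)) *: (delta_mx k m + delta_mx m k)).
  rewrite -[X](subrK A) -/E addrC -{1}avgA -{1}(sym_pair_expansion sE) -big_split.
  apply: eq_bigr => k _; rewrite -big_split; apply: eq_bigr => m _ /=.
  by rewrite [RHS]scalerDr scalerA mulKf //; apply: Rpos_neq0.
apply: CP_sum => k _; apply: CP_sum => m _; apply: CP_scale.
  by rewrite RinvE; [apply/Rlt_le/Rinv_0_lt_compat | apply: Rgt_not_eq].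
apply: slack; apply: half_scaled_bound => //.
by have := hX k m; rewrite /E !mxE.
Qed.

(* A positive multiple kap A = W W^T has a positive
   factor W, so A - e v v^T is CP for every v and small e > 0. *)
Lemma CP_interior_of_slack n (A C : 'M[R]_n) (b : 'cV[R]_n) (l : R) :
  symmetric_mx A -> A \in unitmx -> CP C -> pos_vec b -> Rlt R0 l ->
  A = C + l *: (b *m b^T) -> CP_interior A.
Proof.
move=> sA uA cC pb l0 hA.
have cA : CP A.
  rewrite hA; apply: CP_add => //.
  by apply: CP_scale; [apply: Rlt_le | apply/CP_rank1/pos_vec_nneg].
have [p [W [kap [p0 [kap0 [Wpos hW]]]]]] := positive_factorization cC pb l0.
rewrite -hA in hW.
have uK : W *m W^T \in unitmx by rewrite hW unitmxZ // unitfE Rpos_neq0.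
have slack v : nneg_vec v -> exists e, Rlt R0 e /\ CP (A - e *: (v *m v^T)).
  move=> _; have [e [e0 cK]] := shrink_positive_gram v p0 Wpos uK.
  exists (e / kap)%R; split; first exact: divr_pos.
  apply: (CP_unscale kap0); move: cK; rewrite hW.
  move: (v *m v^T) => V; congr CP; apply/matrixP => i j; rewrite !mxE.
  by field; apply: Rpos_neq0.
have [e [e0 He]] := CP_pair_slack cA slack.
exact: CP_interior_of_pair_slack sA e0 He.
Qed.

Theorem mainTheorem10 (n : nat) (A : 'M[R]_n) (b1 : 'cV[R]_n) :
  symmetric_mx A -> pos_vec b1 ->
  ((~ exists l : R, P1_feasible_set A b1 l) -> ~ CP A) /\
  ((exists l : R, P1_feasible_set A b1 l) ->
   forall f : R, is_lub (P1_feasible_set A b1) f ->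
     (Rlt f R0 -> ~ CP A) /\
     (f = R0 -> CP_boundary A) /\
     (Rlt R0 f -> (\rank A < n)%N -> CP_boundary A) /\
     (Rlt R0 f -> \rank A = n -> CP_interior A)).
Proof.
move=> sA pb; have nb := pos_vec_nneg pb.
split=> [infeasible cA|_ f lubf]; first by apply: infeasible; exists R0; apply/feasible0.
split; [|split; [|split]].
- by move=> f0 /feasible0 /(proj1 lubf) => ?; lra.
- by move=> f0; rewrite f0 in lubf; apply: boundary_of_zero_sup.
- move=> f0 hr; have [l [feas l0]] := lub_approx lubf f0.
  apply: boundary_of_singular => //; apply/(feasible0 A b1).
  by apply: (feasible_down nb feas); apply: Rlt_le.
- move=> f0 hr; have [l [feas l0]] := lub_approx lubf f0.
  apply: (CP_interior_of_slack sA _ feas pb l0); last by rewrite subrK.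
  by rewrite -row_free_unit /row_free hr.
Qed.
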